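(* Let $n\ge 2$ and let $p,q$ be positive integers with $\gcd(p,q)=1$. Let $A$ be the $n\times n$ integer matrix with columns $a_k=q e_k-p e_{k+1}$ ($1\le k\le n-1$) and $a_n=q e_n+p e_1$. Then for every $i\in\{1,\dots,n\}$, $$\min\{l\in\mathbb{Z}_{\ge1} : l e_i\in A\mathbb{Z}^n\}=p^n+q^n.$$ In particular, if moreover $p\neq q$, there exists a unilateral tiling of $(\mathbb{Z}/(p^n+q^n)\mathbb{Z})^n$ by discrete hypercubes of side lengths $p$ and $q$.
   Context: $e_i$ denotes the $i$-th standard unit vector. Let $N=p^n+q^n$. A discrete hypercube of side length $s$ in $(\mathbb{Z}/N\mathbb{Z})^n$ is the image of a set $x+\{0,1,\dots,s-1\}^n$, $x\in\mathbb{Z}^n$, under reduction modulo $N$. A tiling of $(\mathbb{Z}/N\mathbb{Z})^n$ by such hypercubes is a family of them that partitions $(\mathbb{Z}/N\mathbb{Z})^n$; it is unilateral if no two distinct tiles of the same side length $s$ share a full facet, i.e. there are no two tiles of side $s$ with corners $x,x'$ such that $x'-x\equiv \pm s e_i \pmod N$ for some $i$. *)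

From HB Require Import structures.
From mathcomp Require Import all_boot all_order all_algebra.
Set Implicit Arguments. Unset Strict Implicit. Unset Printing Implicit Defensive.
Import Order.TTheory GRing.Theory Num.Theory.
Local Open Scope ring_scope.

(* The n x n integer matrix A (0-based indices): for j < n-1, column j is
   q e_j - p e_(j+1); column n-1 is q e_(n-1) + p e_0. *)
Definition matA (n p q : nat) : 'M[int]_n :=
  \matrix_(i < n, j < n)
    if (j < n.-1)%N then
      (if i == j :> nat then q%:Z else 0) - (if i == j.+1 :> nat then p%:Z else 0)
    else
      (if i == j :> nat then q%:Z else 0) + (if i == 0%N :> nat then p%:Z else 0).

Definition in_lattice (n : nat) (A : 'M[int]_n) (v : 'cV[int]_n) : Prop :=
  exists x : 'cV[int]_n, v = A *m x.

Definition unitv (n : nat) (i : 'I_n) : 'cV[int]_n := delta_mx i 0.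

(* Points of (Z/NZ)^n are represented by integer vectors x : 'I_n -> int,
   compared componentwise modulo N. *)
Definition cong_vec (n N : nat) (x y : 'I_n -> int) : Prop :=
  forall i, (x i == y i %[mod N%:Z])%Z.

Definition cube_mem (n N s : nat) (x y : 'I_n -> int) : Prop :=
  exists t : 'I_n -> nat, (forall i, (t i < s)%N) /\
    cong_vec N y (fun i => x i + (t i)%:Z).

Definition is_tiling (n N : nat) (I : finType) (side : I -> nat)
    (corner : I -> 'I_n -> int) : Prop :=
  forall y : 'I_n -> int, exists! k : I, cube_mem N (side k) (corner k) y.

Definition unilateral (n N : nat) (I : finType) (side : I -> nat)
    (corner : I -> 'I_n -> int) : Prop :=
  forall k k' : I, k != k' -> side k = side k' ->
    forall i : 'I_n,
      ~ cong_vec N (fun j => corner k' j - corner k j)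
                   (fun j => if j == i then (side k)%:Z else 0) /\
      ~ cong_vec N (fun j => corner k' j - corner k j)
                   (fun j => if j == i then - (side k)%:Z else 0).

From HB Require Import structures.
From mathcomp Require Import all_boot all_order all_algebra.
From mathcomp Require Import algC cyclotomic ring zify.
Import Order.TTheory GRing.Theory Num.Theory.
Local Open Scope ring_scope.

(* Everything rests on the weights w_j = q^j p^(m-j) and the functional
   Phi(v) = sum_j w_j v_j.  Since q w_k = p w_(k+1), Phi kills a_k for k < m,
   and Phi(a_m) = q^n + p^n = N; moreover every w_j is coprime to N.

   Phi(A x) is a multiple of N, so l e_i in A Z^n forces
   N | l w_i, hence N | l.  Conversely the relations q e_k = p e_(k+1) and
   q e_m = - p e_0 modulo the lattice chain together to q^n e_i = - p^n e_i.

   The values Phi(t), t in [0,q)^n, and q^n + Phi(s),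
   s in [0,p)^n, form a complete residue system modulo N: their generating
   function vanishes at every nontrivial N-th root of unity (a telescoping
   product identity) and there are exactly N of them.  The tiles are the
   q-cubes with corner x, Phi(x) = 0, and the p-cubes with Phi(x) = q^n
   (mod N); a point y lies in exactly one tile because Phi(y) has exactly one
   representation above.  Unilaterality: two equal-sized corners differ by
   a vector of Phi-value 0 mod N, whereas Phi(+-s e_i) = +-s w_i is not. *)

Section Weights.
Variables m p q : nat.
Local Notation n := m.+1.
Local Notation N := (p ^ n + q ^ n)%N.

Definition wt (j : nat) : nat := (q ^ j * p ^ (m - j))%N.

(* Consecutive weights are proportional, so Phi kills q e_j - p e_(j+1). *)
Lemma wt_step j : (j < m)%N -> (q * wt j = p * wt j.+1)%N.
Proof.
move=> jm; rewrite /wt.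
have -> : (m - j = (m - j.+1).+1)%N by lia.
rewrite !expnS; ring.
Qed.

(* The two extreme weights produce Phi(a_m) = q w_m + p w_0 = N. *)
Lemma wt_first : (p * wt 0 = p ^ n)%N.
Proof. by rewrite /wt subn0 expn0 mul1n expnS. Qed.

Lemma wt_last : (q * wt m = q ^ n)%N.
Proof. by rewrite /wt subnn expn0 muln1 expnS. Qed.

(* gcd(a, b^n + a^n) = gcd(a, b^n): N is coprime to p, to q and to all w_j. *)
Lemma coprime_sum_pow a b : coprime a b -> coprime a (b ^ n + a ^ n).
Proof.
move=> co; rewrite /coprime addnC (expnSr a) gcdnMDl -/(coprime a (b ^ n)).
by apply: coprimeXr.
Qed.

Hypothesis co_pq : coprime p q.

Lemma coprime_p_N : coprime p N.
Proof. by rewrite addnC coprime_sum_pow. Qed.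

Lemma coprime_q_N : coprime q N.
Proof. by rewrite coprime_sum_pow // coprime_sym. Qed.

Lemma coprime_wt_N j : coprime (wt j) N.
Proof.
rewrite /wt coprimeMl; apply/andP; split; apply: coprimeXl.
  exact: coprime_q_N.
exact: coprime_p_N.
Qed.

End Weights.

Section LatticeClosure.
Variables (n : nat) (A : 'M[int]_n).

Lemma in_lattice_image x : in_lattice A (A *m x).
Proof. by exists x. Qed.

Lemma in_lattice_add u v : in_lattice A u -> in_lattice A v -> in_lattice A (u + v).
Proof. by move=> [x ->] [y ->]; exists (x + y); rewrite mulmxDr. Qed.

Lemma in_lattice_scale (a : int) v : in_lattice A v -> in_lattice A (a *: v).
Proof. by move=> [x ->]; exists (a *: x); rewrite scalemxAr. Qed.

End LatticeClosure.

Section Lattice.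
Variables m p q : nat.
Local Notation n := m.+1.
Local Notation N := (p ^ n + q ^ n)%N.
Local Notation A := (matA n p q).

Lemma colA_step (k k1 : 'I_n) : k1 = k.+1 :> nat ->
  A *m unitv k = q%:Z *: unitv k - p%:Z *: unitv k1.
Proof.
move=> k1E; apply/matrixP => i j; rewrite ord1 -colE !mxE /=.
have -> : (k < m)%N by have := ltn_ord k1; lia.
have -> : (i == k1) = (i == k.+1 :> nat) by rewrite -k1E.
rewrite !eqxx !andbT -[i == k]/(i == k :> nat).
by case: (i == k :> nat); case: (i == k.+1 :> nat); rewrite ?mulr1 ?mulr0.
Qed.

Lemma colA_last : A *m unitv ord_max = q%:Z *: unitv ord_max + p%:Z *: unitv ord0.
Proof.
apply/matrixP => i j; rewrite ord1 -colE !mxE /= ltnn !eqxx !andbT.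
rewrite -[i == ord_max]/(i == m :> nat) -[i == ord0]/(i == 0 :> nat).
by case: (i == m :> nat); case: (i == 0 :> nat); rewrite ?mulr1 ?mulr0.
Qed.

Lemma lattice_chain (j : nat) (i k : 'I_n) : k = (i + j)%N :> nat ->
  in_lattice A (q%:Z ^+ j *: unitv i - p%:Z ^+ j *: unitv k).
Proof.
elim: j k => [|j IHj] k kE.
  rewrite addn0 in kE; rewrite (val_inj kE) subrr.
  by exists 0; rewrite mulmx0.
have lt_k0 : (i + j < n)%N by have := ltn_ord k; rewrite kE addnS; lia.
pose k0 : 'I_n := Ordinal lt_k0.
have -> : q%:Z ^+ j.+1 *: unitv i - p%:Z ^+ j.+1 *: unitv k =
          q%:Z *: (q%:Z ^+ j *: unitv i - p%:Z ^+ j *: unitv k0)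
          + p%:Z ^+ j *: (A *m unitv k0).
  rewrite (colA_step k0 k) /=; last by rewrite kE addnS.
  by apply/matrixP => a b; rewrite !mxE !exprS; ring.
apply: in_lattice_add; apply: in_lattice_scale; first exact: IHj.
exact: in_lattice_image.
Qed.

(* Going from e_i up to e_m, across the wrap-around column a_m, and from e_0
   back to e_i gives q^n e_i = - p^n e_i modulo the lattice. *)
Lemma lattice_multiple (i : 'I_n) : in_lattice A (N%:Z *: unitv i).
Proof.
have up_to_last := lattice_chain (m - i)%N i ord_max (esym (subnKC (ltnSE (ltn_ord i)))).
have from_first := lattice_chain i ord0 i (erefl _).
have -> : N%:Z *: unitv i =
    q%:Z ^+ i.+1 *: (q%:Z ^+ (m - i)%N *: unitv i - p%:Z ^+ (m - i)%N *: unitv ord_max)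
    + (p%:Z ^+ (m - i)%N * q%:Z ^+ i) *: (A *m unitv ord_max)
    - p%:Z ^+ (m - i)%N.+1 *: (q%:Z ^+ i *: unitv ord0 - p%:Z ^+ i *: unitv i).
  have split_pow (x : int) : x ^+ n = x ^+ (m - i) * x ^+ i * x.
    by rewrite -exprD -exprSr subnK // -ltnS.
  rewrite colA_last PoszD -!natz !natrX !split_pow.
  by apply/matrixP => a b; rewrite !mxE !exprS; ring.
apply: in_lattice_add; last by rewrite -scaleNr; apply: in_lattice_scale.
apply: in_lattice_add; apply: in_lattice_scale => //.
exact: in_lattice_image.
Qed.

(* The weight row vector: wrow *m v = Phi(v). *)
Definition wrow : 'rV[int]_n := \row_j (wt m p q j)%:Z.

Lemma wrow_unit (k : 'I_n) : wrow *m unitv k = (wt m p q k)%:Z%:M.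
Proof. by apply/matrixP => a b; rewrite !ord1 -colE !mxE eqxx. Qed.

Lemma wrow_A : wrow *m A = N%:Z *: delta_mx 0 ord_max.
Proof.
apply/matrixP => a k; rewrite ord1.
have -> : (wrow *m A) 0 k = (wrow *m (A *m unitv k)) 0 0 by rewrite mulmxA -colE [RHS]mxE.
rewrite [RHS]mxE [delta_mx _ _ _ _]mxE eqxx /=.
case: (ltnP k m) => km.
  have lt_k1 : (k.+1 < n)%N by [].
  rewrite (colA_step k (Ordinal lt_k1)) // mulmxBr -!scalemxAr !wrow_unit !mxE /=.
  rewrite -!PoszM wt_step // subrr.
  suff -> : (k == ord_max) = false by rewrite mulr0.
  by apply/negbTE; rewrite -val_eqE /= neq_ltn km.
have -> : k = ord_max by apply/val_inj => /=; have := ltn_ord k; lia.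
rewrite colA_last mulmxDr -!scalemxAr !wrow_unit !mxE /= eqxx.
by rewrite !mulr1n mulr1 -!PoszM -PoszD wt_last wt_first addnC.
Qed.

(* Minimality: applying Phi to l e_i = A x gives l w_i = N x_m. *)
Lemma lattice_lower (i : 'I_n) (l : nat) : coprime p q ->
  in_lattice A (l%:Z *: unitv i) -> (N %| l)%N.
Proof.
move=> co [x hx].
have := congr1 (fun v => (wrow *m v) 0 0) hx => /=.
rewrite mulmxA wrow_A -scalemxAl -scalemxAr wrow_unit !mxE eqxx mulr1n => e.
have : (N%:Z %| (l * wt m p q i)%N%:Z)%Z by rewrite PoszM e dvdz_mulr.
rewrite dvdzE !absz_nat Gauss_dvdl // coprime_sym.
exact: coprime_wt_N.
Qed.
End Lattice.

Lemma root1_coprime (z : algC) a b : coprime a b -> z ^+ a = 1 -> z ^+ b = 1 -> z = 1.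
Proof.
move=> co za zb.
case: (posnP a) => [a0|a_gt0].
  by move: co; rewrite a0 /coprime gcd0n => /eqP b1; rewrite b1 expr1 in zb.
case: (egcdnP b a_gt0) => km kn E _.
move/eqP: co => co; rewrite co in E.
have : z ^+ (km * a) = z ^+ (kn * b + 1) by rewrite E.
by rewrite exprD expr1 (mulnC _ a) (mulnC _ b) !exprM za zb !expr1n mul1r.
Qed.

Lemma geom_mul (u : algC) a : (1 - u) * \sum_(b < a) u ^+ b = 1 - u ^+ a.
Proof. by rewrite -opprB mulNr -subrX1 opprB. Qed.

Lemma geom_root_unity (z : algC) N : z ^+ N = 1 -> z != 1 -> \sum_(i < N) z ^+ i = 0.
Proof.
move=> zN z1; apply/eqP.
have : (z - 1) * \sum_(i < N) z ^+ i == 0 by rewrite -subrX1 zN subrr.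
by rewrite mulf_eq0 subr_eq0 (negbTE z1).
Qed.

Lemma box_sum (z : algC) n a (w : 'I_n -> nat) :
  \sum_(t : {ffun 'I_n -> 'I_a}) z ^+ (\sum_j t j * w j)%N =
  \prod_(j < n) \sum_(b < a) (z ^+ w j) ^+ b.
Proof.
rewrite bigA_distr_bigA; apply: eq_bigr => t _.
rewrite -prodrXr; apply: eq_bigr => j _.
by rewrite -exprM mulnC.
Qed.

Lemma count_residues (T : finType) (f : T -> nat) (z : algC) N :
  (0 < N)%N -> z ^+ N = 1 ->
  \sum_(i < N) #|[pred x | (f x %% N)%N == i]|%:R * z ^+ i = \sum_x z ^+ f x.
Proof.
move=> N0 zN.
pose res x : 'I_N := Ordinal (ltn_pmod (f x) N0).
rewrite (partition_big res predT) //=; apply: eq_bigr => i _.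
rewrite (eq_bigr (fun _ => z ^+ i)); last by move=> x /eqP <-; rewrite /= expr_mod.
by rewrite sumr_const mulr_natl.
Qed.

(* N natural numbers whose generating function vanishes at every nontrivial
   N-th root of unity form a complete residue system modulo N: the difference
   with 1 + z + ... + z^(N-1) is a polynomial of degree < N with N roots. *)
Lemma residues_once (T : finType) (f : T -> nat) N : #|T| = N ->
  (forall z : algC, z ^+ N = 1 -> z != 1 -> \sum_x z ^+ f x = 0) ->
  forall i, (i < N)%N -> #|[pred x | (f x %% N)%N == i]| = 1%N.
Proof.
move=> cardT gen_sum i iN.
have N0 : (0 < N)%N by apply: leq_ltn_trans iN.
have [zeta prim] := C_prim_root_exists N0.
pose excess k : algC := #|[pred x | (f x %% N)%N == k]|%:R - 1.
pose g := \poly_(k < N) excess k.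
have g_root z : z ^+ N = 1 -> g.[z] = \sum_x z ^+ f x - \sum_(k < N) z ^+ k.
  move=> zN; rewrite horner_poly /excess.
  under eq_bigr do rewrite mulrBl mul1r.
  by rewrite sumrB count_residues.
have g0 : g = 0.
  apply: (@roots_geq_poly_eq0 _ g [seq zeta ^+ k | k <- iota 0 N]).
  - apply/allP => _ /mapP [k kN ->].
    have zN : (zeta ^+ k) ^+ N = 1 by rewrite exprAC (prim_expr_order prim) expr1n.
    rewrite /root g_root //.
    case: (posnP k) => [->|k0].
      under eq_bigr do rewrite expr0 expr1n.
      under [X in _ - X]eq_bigr do rewrite expr0 expr1n.
      by rewrite !sumr_const card_ord cardT subrr.
    have z1 : zeta ^+ k != 1.
      rewrite -(expr0 zeta) (eq_prim_root_expr prim) mod0n modn_small -?lt0n //.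
      by move: kN; rewrite mem_iota.
    by rewrite gen_sum // geom_root_unity // subrr.
  - rewrite map_inj_in_uniq ?iota_uniq // => a b.
    rewrite !mem_iota /= !add0n => aN bN /eqP.
    by rewrite (eq_prim_root_expr prim) !modn_small // => /eqP.
  - by rewrite size_map size_iota size_poly.
move: (congr1 (fun P : {poly algC} => P`_i) g0).
by rewrite coef_poly iN coef0 /excess => /eqP; rewrite subr_eq0 pnatr_eq1 => /eqP.
Qed.

Lemma eqz_mod_nat (a : nat) (M : int) N : (0 < N)%N ->
  (a%:Z == M %[mod N%:Z])%Z = ((a %% N)%N == absz (M %% N%:Z)%Z).
Proof.
move=> N0; have M_ge0 : (0 <= M %% N%:Z)%Z by apply: modz_ge0; rewrite eqz_nat -lt0n.
by rewrite -(gez0_abs M_ge0) modz_nat eqz_nat.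
Qed.

Lemma absz_mod_lt (M : int) N : (0 < N)%N -> (absz (M %% N%:Z)%Z < N)%N.
Proof.
move=> N0; have N0' : N%:Z != 0 by rewrite eqz_nat -lt0n.
by rewrite -ltz_nat gez0_abs ?modz_ge0 // ltz_pmod // ltz_nat.
Qed.

Lemma eq_mod_small (a b N : nat) : (a < N)%N -> (b < N)%N ->
  (a%:Z == b%:Z %[mod N%:Z])%Z -> a = b.
Proof. by move=> aN bN; rewrite !modz_nat eqz_nat !modn_small // => /eqP. Qed.

Section Tiling.
Variables m p q : nat.
Local Notation n := m.+1.
Local Notation N := (p ^ n + q ^ n)%N.
Local Notation w := (wt m p q).

(* Representatives: an offset in the box [0,q)^n (kind true) or in [0,p)^n
   (kind false); the latter are shifted by base false = q^n. *)
Definition Rep : finType := ({ffun 'I_n -> 'I_q} + {ffun 'I_n -> 'I_p})%type.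

Definition kind (r : Rep) : bool := if r is inl _ then true else false.

Definition offset (r : Rep) : 'I_n -> nat :=
  match r with inl t => fun j => t j | inr s => fun j => s j end.

Definition base (b : bool) : nat := if b then 0%N else (q ^ n)%N.

Definition rep_val (r : Rep) : nat := (base (kind r) + \sum_j offset r j * w j)%N.

(* Since q w_j = p w_(j+1), the products over (1 - z^(q w_j)) and over
   (1 - z^(p w_j)) share all factors but z^(q^n) and z^(p^n) respectively. *)
Lemma shifted_prod (z : algC) :
  let P := \prod_(j < m) (1 - z ^+ (w j * q)) in
  \prod_(j < n) (1 - z ^+ (w j * q)) = P * (1 - z ^+ (q ^ n)) /\
  \prod_(j < n) (1 - z ^+ (w j * p)) = (1 - z ^+ (p ^ n)) * P.
Proof.
move=> P; split; first by rewrite big_ord_recr /= [(w m * q)%N]mulnC wt_last.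
rewrite big_ord_recl /= [(w 0 * p)%N]mulnC wt_first; congr (_ * _).
apply: eq_bigr => j _; congr (1 - z ^+ _).
by rewrite /= /bump /= add1n mulnC [RHS]mulnC wt_step.
Qed.

Hypotheses (co_pq : coprime p q) (p_gt0 : (0 < p)%N) (q_gt0 : (0 < q)%N).

(* Multiplied by prod_j (1 - z^(w_j)) (nonzero as w_j is coprime to N), the
   generating function of the representatives becomes P (1 - z^(p^n + q^n)). *)
Lemma rep_gen_vanish (z : algC) : z ^+ N = 1 -> z != 1 -> \sum_(r : Rep) z ^+ rep_val r = 0.
Proof.
move=> zN z1.
rewrite big_sumType /=.
have val_inr s : z ^+ rep_val (inr s) = z ^+ (q ^ n) * z ^+ (\sum_j s j * w j) by rewrite -exprD.
under [X in _ + X]eq_bigr do rewrite val_inr.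
rewrite -mulr_sumr !box_sum.
set D := \prod_(j < n) (1 - z ^+ w j).
have D0 : D != 0.
  apply/prodf_neq0 => j _; rewrite subr_eq0 eq_sym; apply: contra z1 => /eqP zw.
  by apply/eqP; apply: (root1_coprime z _ _ (coprime_wt_N m p q co_pq j) zw zN).
apply/eqP; rewrite -(mulrI_eq0 _ (mulfI D0)) mulrDr mulrCA -!big_split /=.
under eq_bigr do rewrite geom_mul -exprM.
under [X in _ + _ * X]eq_bigr do rewrite geom_mul -exprM.
have [-> ->] := shifted_prod z.
set P := \prod_(j < m) _.
have zpq : z ^+ (p ^ n) * z ^+ (q ^ n) = 1 by rewrite -exprD.
apply/eqP; transitivity (P * (1 - z ^+ (p ^ n) * z ^+ (q ^ n))); first by ring.
by rewrite zpq subrr mulr0.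
Qed.

Lemma card_Rep : #|Rep| = N.
Proof. by rewrite card_sum !card_ffun !card_ord addnC. Qed.

Lemma unique_rep (M : int) : exists! r : Rep, ((rep_val r)%:Z == M %[mod N%:Z])%Z.
Proof.
have N0 : (0 < N)%N by rewrite addn_gt0 expn_gt0 p_gt0.
have := @residues_once _ rep_val _ card_Rep rep_gen_vanish _ (absz_mod_lt M N N0).
move=> /eqP /card1P [r hr].
have in_class x : ((rep_val x)%:Z == M %[mod N%:Z])%Z = (x == r).
  by rewrite eqz_mod_nat //; have := hr x; rewrite !inE.
by exists r; split => [|x]; rewrite in_class // => /eqP.
Qed.

Definition Phi (v : 'I_n -> int) : int := \sum_j v j * (w j)%:Z.

Lemma Phi_ext u v : u =1 v -> Phi u = Phi v.
Proof. by move=> uv; apply: eq_bigr => j _; rewrite uv. Qed.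

Lemma Phi_add u v : Phi (fun j => u j + v j) = Phi u + Phi v.
Proof. by rewrite /Phi -big_split; apply: eq_bigr => j _; rewrite mulrDl. Qed.

Lemma Phi_sub u v : Phi (fun j => u j - v j) = Phi u - Phi v.
Proof. by rewrite /Phi -sumrB; apply: eq_bigr => j _; rewrite mulrBl. Qed.

Lemma Phi_cong {M : int} {u v : 'I_n -> int} :
  (forall j, (u j == v j %[mod M])%Z) -> (Phi u == Phi v %[mod M])%Z.
Proof.
move=> uv; rewrite eqz_mod_dvd -Phi_sub /Phi; apply: rpred_sum => j _.
by apply: dvdz_mulr; rewrite -eqz_mod_dvd.
Qed.

Lemma Phi_delta (i : 'I_n) (s : int) : Phi (fun j => if j == i then s else 0) = s * (w i)%:Z.
Proof.
rewrite /Phi (bigD1 i) //= eqxx big1 ?addr0 // => j ji.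
by rewrite (negbTE ji) mul0r.
Qed.

Lemma rep_val_Phi (r : Rep) :
  (rep_val r)%:Z = (base (kind r))%:Z + Phi (fun j => (offset r j)%:Z).
Proof.
rewrite /rep_val PoszD /Phi (big_morph Posz PoszD (erefl 0%:Z)).
by congr (_ + _); apply: eq_bigr => j _; rewrite PoszM.
Qed.

(* The representative of kind b with offset t (t is reduced, so rep_of is
   total; offset_rep_of says nothing is lost when t lies in the box). *)
Definition rep_of (b : bool) (t : 'I_n -> nat) : Rep :=
  if b then inl [ffun j => Ordinal (ltn_pmod (t j) q_gt0)]
  else inr [ffun j => Ordinal (ltn_pmod (t j) p_gt0)].

Definition side (b : bool) : nat := if b then q else p.

Lemma kind_rep_of b t : kind (rep_of b t) = b.
Proof. by case: b. Qed.

Lemma offset_rep_of {b t} : (forall j, t j < side b)%N -> offset (rep_of b t) =1 t.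
Proof. by case: b => t_lt j /=; rewrite ffunE /= modn_small. Qed.

Lemma offset_lt r j : (offset r j < side (kind r))%N.
Proof. by case: r => t /=. Qed.

(* A tile is a kind b and a corner x in [0,N)^n with Phi(x) = base b mod N;
   kind true gives q-cubes, kind false gives p-cubes. *)
Definition tile_ok (k : bool * {ffun 'I_n -> 'I_N}) : bool :=
  (Phi (fun i => (k.2 i : nat)%:Z) == (base k.1)%:Z %[mod N%:Z])%Z.

Definition Tile : finType := {k : bool * {ffun 'I_n -> 'I_N} | tile_ok k}.

Definition tile_side (k : Tile) : nat := side (val k).1.

Definition tile_corner (k : Tile) : 'I_n -> int := fun i => ((val k).2 i : nat)%:Z.

Lemma cube_mem_rep {k : Tile} {t : 'I_n -> nat} {y : 'I_n -> int} :
  (forall i, t i < tile_side k)%N ->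
  cong_vec N y (fun i => tile_corner k i + (t i)%:Z) ->
  ((rep_val (rep_of (val k).1 t))%:Z == Phi y %[mod N%:Z])%Z.
Proof.
move=> t_lt y_in; rewrite rep_val_Phi kind_rep_of.
rewrite (Phi_ext _ (fun j => (t j)%:Z)); last by move=> j; rewrite offset_rep_of.
have := Phi_cong y_in; rewrite Phi_add => /eqP ->.
by rewrite eqz_modDr eq_sym; apply: (valP k).
Qed.

(* Two tiles containing y yield the same representative of Phi(y), hence the
   same kind and offset, hence congruent and so equal corners. *)
Lemma tile_unique (k k' : Tile) (y : 'I_n -> int) :
  cube_mem N (tile_side k) (tile_corner k) y ->
  cube_mem N (tile_side k') (tile_corner k') y -> k = k'.
Proof.
move=> [t [t_lt y_in]] [t' [t'_lt y_in']].
have [r [_ r_uniq]] := unique_rep (Phi y).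
have same_rep : rep_of (val k).1 t = rep_of (val k').1 t'.
  by rewrite -(r_uniq _ (cube_mem_rep t_lt y_in)) -(r_uniq _ (cube_mem_rep t'_lt y_in')).
have same_kind : (val k).1 = (val k').1.
  by rewrite -(kind_rep_of (val k).1 t) same_rep kind_rep_of.
have same_offset j : t j = t' j.
  by rewrite -(offset_rep_of t_lt j) same_rep (offset_rep_of t'_lt).
apply/val_inj/injective_projections => //; apply/ffunP => i; apply/val_inj.
apply: (@eq_mod_small _ _ N); rewrite ?ltn_ord // -(eqz_modDr (t i)%:Z).
by rewrite -(eqP (y_in i)) same_offset -(eqP (y_in' i)).
Qed.

(* y lies in the tile whose corner is y minus the offset of the
   representative of Phi(y). *)
Lemma tile_cover (y : 'I_n -> int) : exists k : Tile, cube_mem N (tile_side k) (tile_corner k) y.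
Proof.
have N0 : (0 < N)%N by rewrite addn_gt0 expn_gt0 p_gt0.
have [r [r_y _]] := unique_rep (Phi y).
pose t := offset r.
pose x : {ffun 'I_n -> 'I_N} := [ffun i => Ordinal (absz_mod_lt (y i - (t i)%:Z) N N0)].
have xE i : (x i : nat)%:Z = ((y i - (t i)%:Z) %% N%:Z)%Z.
  by rewrite ffunE /= gez0_abs // modz_ge0 // eqz_nat -lt0n.
have x_ok : tile_ok (kind r, x).
  rewrite /tile_ok /= (eqP (Phi_cong (v := fun i => y i - (t i)%:Z) _)); last first.
    by move=> i; rewrite xE modz_mod.
  have -> : (base (kind r))%:Z = (rep_val r)%:Z - Phi (fun i => (t i)%:Z) by rewrite rep_val_Phi addrK.
  by rewrite Phi_sub eqz_modDr eq_sym.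
exists (exist _ (kind r, x) x_ok), t; split; first exact: offset_lt.
by move=> i; rewrite /tile_corner /= xE; apply/eqP; rewrite modzDml subrK.
Qed.

Lemma tiling : is_tiling N tile_side tile_corner.
Proof.
move=> y; have [k y_k] := tile_cover y.
by exists k; split => // k' y_k'; apply: tile_unique y_k y_k'.
Qed.

Lemma side_wt_not_div (b : bool) (i : 'I_n) : ~ (N%:Z %| (side b)%:Z * (w i)%:Z)%Z.
Proof.
rewrite -PoszM dvdzE !absz_nat => N_dvd.
have : coprime N (side b * w i).
  rewrite coprimeMr; apply/andP; split; rewrite coprime_sym; last exact: coprime_wt_N.
  by rewrite /side; case: ifP => _; [exact: coprime_q_N | exact: coprime_p_N].
rewrite /coprime (gcdn_idPl N_dvd) => /eqP N1.
by move: N1 (expn_gt0 p n) (expn_gt0 q n); rewrite p_gt0 q_gt0; lia.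
Qed.

Lemma corner_diff_div {k k' : Tile} {i : 'I_n} {v : int} : (val k).1 = (val k').1 ->
  cong_vec N (fun j => tile_corner k' j - tile_corner k j) (fun j => if j == i then v else 0) ->
  (N%:Z %| v * (w i)%:Z)%Z.
Proof.
move=> same_kind /Phi_cong; rewrite Phi_sub Phi_delta eqz_mod_dvd => diff_dvd.
have := valP k'; have := valP k; rewrite /tile_ok -same_kind !eqz_mod_dvd => ok ok'.
have -> : v * (w i)%:Z = (Phi (tile_corner k') - (base (val k).1)%:Z)
   - (Phi (tile_corner k) - (base (val k).1)%:Z)
   - (Phi (tile_corner k') - Phi (tile_corner k) - v * (w i)%:Z) by ring.
by apply: rpredB; first exact: rpredB ok' ok.
Qed.

Lemma unilateral_tiling : p != q -> unilateral N tile_side tile_corner.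
Proof.
move=> p_neq_q k k' _ same_side i.
have same_kind : (val k).1 = (val k').1.
  move: same_side; rewrite /tile_side /side.
  by case: (val k).1; case: (val k').1 => // side_eq; move: p_neq_q; rewrite side_eq eqxx.
split=> [/(corner_diff_div same_kind)|/(corner_diff_div same_kind)]; first exact: side_wt_not_div.
by rewrite mulNr rpredN; apply: side_wt_not_div.
Qed.
End Tiling.

Theorem theorem4 (n p q : nat) :
  (2 <= n)%N -> (0 < p)%N -> (0 < q)%N -> coprime p q ->
  (forall i : 'I_n,
     in_lattice (matA n p q) ((p ^ n + q ^ n)%N%:Z *: unitv i) /\
     (forall l : nat, (0 < l)%N ->
        in_lattice (matA n p q) (l%:Z *: unitv i) -> (p ^ n + q ^ n <= l)%N))
  /\
  (p != q ->
   exists (I : finType) (side : I -> nat) (corner : I -> 'I_n -> int),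
     is_tiling (p ^ n + q ^ n) side corner /\
     (forall k, side k = p \/ side k = q) /\
     unilateral (p ^ n + q ^ n) side corner).
Proof.
case: n => [//|m] _ p_gt0 q_gt0 co_pq; split.
  move=> i; split; first exact: lattice_multiple.
  by move=> l l_gt0 /(lattice_lower m p q i l co_pq) /dvdn_leq; apply.
move=> p_neq_q.
exists (Tile m p q), (tile_side m p q), (tile_corner m p q); split.
  exact: tiling.
split; last exact: unilateral_tiling.
by move=> k; rewrite /tile_side /side; case: ifP; [right | left].
Qed.
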